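(* Let $G$ be a finite simple graph and $e$ a pair of distinct vertices of $G$. For each $i\ge0$, $$a_i(G+e)=a_i(G)+\sum_{J\in\mathcal{E}\mathcal{C}(G+e)\setminus\mathcal{E}\mathcal{C}(G)}|b(G|_J)|\cdot a_{i-\frac{|J|}{2}}\big((G+e)^\ast_J\big).$$
   Context: All graphs are finite simple graphs; $G|_I$ is the induced subgraph on $I\subseteq V(G)$. The signed $a$-number: $sa(\emptyset)=1$ for the null graph; if $G$ has connected components $G_1,\dots,G_\ell$, $sa(G)=\prod_k sa(G_k)$; if $G$ is connected and nonempty, $sa(G)=-\sum_{I\subsetneq V(G)}sa(G|_I)$ when $|V(G)|$ is even and $sa(G)=0$ when $|V(G)|$ is odd. The $a$-number is $a(G)=|sa(G)|$; for an integer $i$, $a_i(G)=\sum_{I\subseteq V(G),\,|I|=2i}a(G|_I)$ (so $a_i(G)=0$ if $i<0$ or $2i>|V(G)|$). The $b$-number is $b(G)=\sum_{I\subseteq V(G)}sa(G|_I)$. $\mathcal{E}\mathcal{C}(G)=\{I\subseteq V(G): G|_I\text{ has no connected component of odd order}\}$. $G+e$ is $G$ with $e$ added as an edge ($G+e=G$ if $e\in E(G)$). The reconnected complement $H^\ast_J$ of $J\subseteq V(H)$ is the graph on $V(H)\setminus J$ in which $\{a,b\}$ is an edge iff there is a path from $a$ to $b$ in $H|_{J\cup\{a,b\}}$. *)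

From mathcomp Require Import all_boot all_order all_algebra.
Set Implicit Arguments. Unset Strict Implicit. Unset Printing Implicit Defensive.
Import GRing.Theory Num.Theory.
Local Open Scope ring_scope.

(* A finite simple graph is a symmetric irreflexive relation g on a finType T;
   its vertex set is [set: T]. Induced subgraphs are given by vertex sets I. *)
Section Graphs.
Variable T : finType.

Definition rel_on (g : rel T) (I : {set T}) : rel T :=
  [rel x y | [&& x \in I, y \in I & g x y]].

Definition comps (g : rel T) (I : {set T}) : {set {set T}} :=
  [set [set y in I | connect (rel_on g I) x y] | x in I].

Fixpoint sa_fuel (n : nat) (g : rel T) (I : {set T}) : int :=
  match n with
  | 0 => 1 (* never reached *)
  | n'.+1 =>
      \prod_(C in comps g I)
        (if odd #|C| then 0
         else - \sum_(J in powerset C | J != C) sa_fuel n' g J)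
  end.

Definition sa (g : rel T) (I : {set T}) : int := sa_fuel #|I|.+1 g I.

(* a_i of the graph g|_V, for an integer index i (0 when i < 0) *)
Definition a_idx (g : rel T) (V : {set T}) (i : int) : nat :=
  match i with
  | Posz k => \sum_(I in powerset V | #|I| == k.*2) `|sa g I|%N
  | Negz _ => 0%N
  end.

Definition bnum (g : rel T) (J : {set T}) : int :=
  \sum_(I in powerset J) sa g I.

Definition EC (g : rel T) (I : {set T}) : bool :=
  [forall C in comps g I, ~~ odd #|C|].

Definition add_edge (g : rel T) (u v : T) : rel T :=
  [rel x y | [|| g x y, (x == u) && (y == v) | (x == v) && (y == u)]].

(* edge relation of the reconnected complement h^*_J; its vertex set is ~: J *)
Definition reconn (h : rel T) (J : {set T}) : rel T :=
  [rel a b | (a != b) && connect (rel_on h (J :|: [set a; b])) a b].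

End Graphs.

From mathcomp Require Import all_boot all_order all_algebra.
From mathcomp Require Import zify.
Set Implicit Arguments. Unset Strict Implicit. Unset Printing Implicit Defensive.
Import GRing.Theory Num.Theory.

(* The proof rests on a deletion recursion for the signed a-number.  Write
   h = G + e.  For every vertex set I,
     sa(h|_I) = sa(G|_I) - \sum_J b(G|_J) sa(h^*_J|_(I \ J)),
   J ranging over the subsets of I in EC(h) \ EC(G).  The right-hand side
   vanishes off EC(h), is 1 at the empty set and sums to 0 over the subsets of
   any nonempty I in EC(h).  These properties characterise I |-> sa(h|_I),
   because b vanishes on every nonempty graph in EC: it is multiplicative over
   a component and its complement, and vanishes on an even connected graph.
   Next, sa(G) has sign (-1)^(|V|/2) and b(G) has sign (-1)^((|V| - odd(G))/2),
   where odd(G) counts the odd components.  Both are proved together by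
   induction on the numbers of vertices and edges via the same recursion: a set
   J in EC(h) \ EC(G) has exactly two odd components in G, so every term of the
   recursion has the sign of the leading one.  Taking absolute values, the
   recursion becomes a sum of nonnegative terms, and summing it over the sets
   I of size 2i gives the formula for a_i. *)

(** * Sums over subsets *)

Lemma setDK (T : finType) (I J : {set T}) : J \subset I -> J :|: (I :\: J) = I.
Proof. by move=> JI; rewrite -{2}(setID I J) (setIidPr JI). Qed.

Lemma disjoint_setD (T : finType) (I J : {set T}) : [disjoint J & I :\: J].
Proof. by rewrite -setI_eq0 setDE setICA setICr setI0. Qed.

Section PowersetSums.
Variables (T : finType) (R : Type) (idx : R) (op : Monoid.com_law idx).
Implicit Types (A B C I J W : {set T}).

Lemma big_powerset_setU (F : {set T} -> R) A C W : A \subset C -> C \subset W ->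
  \big[op/idx]_(I in powerset W | I :&: C == A) F I =
  \big[op/idx]_(B in powerset (W :\: C)) F (A :|: B).
Proof.
move=> AC CW; rewrite (reindex_onto (fun B => A :|: B) (fun I => I :\: C)) /=.
  apply: eq_bigl => B; rewrite !powersetE.
  apply/idP/idP => [/andP [/andP [ABW _] /eqP eB]|].
    by rewrite -eB setSD.
  rewrite subsetD => /andP [BW dBC].
  rewrite subUset (subset_trans AC CW) BW setIUl (setIidPl AC) (disjoint_setI0 dBC).
  by rewrite setU0 setDUl (setDidPl dBC) (eqP (_ : A :\: C == set0)) ?setD_eq0 ?set0U ?eqxx.
by move=> I /andP [_ /eqP <-]; rewrite setID.
Qed.

Lemma big_powerset_supset (F : {set T} -> R) J W : J \subset W ->
  \big[op/idx]_(K in powerset W | J \subset K) F K =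
  \big[op/idx]_(L in powerset (W :\: J)) F (J :|: L).
Proof.
move=> JW; rewrite -big_powerset_setU //; apply: eq_bigl => K.
by congr (_ && _); apply/idP/eqP => /setIidPr.
Qed.

Lemma big_powerset_split (F : {set T} -> R) C W : C \subset W ->
  \big[op/idx]_(I in powerset W) F I =
  \big[op/idx]_(A in powerset C) \big[op/idx]_(B in powerset (W :\: C)) F (A :|: B).
Proof.
move=> CW; rewrite (partition_big (fun I => I :&: C) (mem (powerset C))) => [|I _].
  by apply: eq_bigr => A; rewrite inE powersetE => AC; rewrite big_powerset_setU.
by rewrite inE powersetE subsetIr.
Qed.

Lemma big_powerset_exchange (P : pred {set T}) (F : {set T} -> {set T} -> R) W :
  \big[op/idx]_(K in powerset W) \big[op/idx]_(J in powerset K | P J) F J K =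
  \big[op/idx]_(J in powerset W | P J)
      \big[op/idx]_(L in powerset (W :\: J)) F J (J :|: L).
Proof.
rewrite (exchange_big_dep (fun J => (J \in powerset W) && P J)) => [|K J].
  apply: eq_bigr => J /andP [JW PJ]; rewrite -big_powerset_supset -?powersetE //.
  by apply: eq_bigl => K; rewrite !powersetE PJ andbT.
by rewrite !powersetE => KW /andP [JK ->]; rewrite (subset_trans JK KW).
Qed.

Lemma big_powerset_pairs (P : pred {set T}) (F : {set T} -> {set T} -> R) n :
  \big[op/idx]_(I in powerset [set: T] | #|I| == n)
     \big[op/idx]_(J in powerset I | P J) F J (I :\: J) =
  \big[op/idx]_(J | P J)
     \big[op/idx]_(L in powerset (~: J) | #|J| + #|L| == n) F J L.
Proof.
rewrite big_mkcondr; under eq_bigr => K _.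
  rewrite (_ : (if _ then _ else _) = \big[op/idx]_(J in powerset K | P J)
             (if #|K| == n then F J (K :\: J) else idx)); last first.
    by case: ifP => // _; rewrite big1.
  over.
rewrite big_powerset_exchange; apply: eq_big => [J|J _]; first by rewrite powersetT inE.
rewrite setTD big_mkcondr; apply: eq_bigr => L; rewrite powersetCE => dLJ.
rewrite setDUl setDv set0U (setDidPl dLJ) cardsU.
by rewrite (disjoint_setI0 (_ : [disjoint J & L])) ?cards0 ?subn0 // disjoint_sym.
Qed.

End PowersetSums.

(** * Components of induced subgraphs *)

Lemma connect_stable (T : finType) (e : rel T) (P : T -> Prop) x y :
  P x -> (forall a b, P a -> e a b -> P b) -> connect e x y -> P y.
Proof.
move=> Px step /connectP [p pth ->].
elim: p x Px pth => [|z p IH] x Px //= /andP [exz pth].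
exact: IH (step _ _ Px exz) pth.
Qed.

Section Components.
Variables (T : finType) (g : rel T).
Hypothesis sg : symmetric g.
Implicit Types (I W X C : {set T}).

Lemma rel_on_sym I : symmetric (rel_on g I).
Proof. by move=> x y; rewrite /rel_on /= sg andbCA. Qed.

Lemma connect_on_sym I : connect_sym (rel_on g I).
Proof. exact/sym_connect_sym/rel_on_sym. Qed.

Lemma connect_onS X I x y :
  X \subset I -> connect (rel_on g X) x y -> connect (rel_on g I) x y.
Proof.
move=> XI; apply: connect_sub => a b /and3P [aX bX gab]; apply: connect1.
by rewrite /rel_on /= (subsetP XI _ aX) (subsetP XI _ bX).
Qed.

Definition component I x := [set y in I | connect (rel_on g I) x y].

Lemma compsE I : comps g I = [set component I x | x in I]. Proof. by []. Qed.

Lemma comp_mem I x : x \in I -> x \in component I x.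
Proof. by move=> xI; rewrite inE xI connect0. Qed.

Lemma comp_sub I x : component I x \subset I.
Proof. by apply/subsetP => y; rewrite inE => /andP []. Qed.

Lemma comp_in I x : x \in I -> component I x \in comps g I.
Proof. exact: imset_f. Qed.

Lemma compsP I C : C \in comps g I -> exists2 x, x \in I & C = component I x.
Proof. by case/imsetP => x xI ->; exists x. Qed.

Lemma comps_sub I C : C \in comps g I -> C \subset I.
Proof. by case/compsP => x _ ->; apply: comp_sub. Qed.

Lemma comps_nonempty I C : C \in comps g I -> exists x, x \in C.
Proof. by case/compsP => x xI ->; exists x; apply: comp_mem. Qed.

Lemma comp_eq I x y : y \in component I x -> component I y = component I x.
Proof.
rewrite inE => /andP [_ cxy]; apply/setP => z; rewrite !inE.
by rewrite (same_connect (connect_on_sym I) cxy) connect_on_sym.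
Qed.

Lemma comps_mem I C x : C \in comps g I -> x \in C -> C = component I x.
Proof. by case/compsP => y _ -> /comp_eq ->. Qed.

Lemma comp_disjoint I x y :
  ~~ connect (rel_on g I) x y -> [disjoint component I x & component I y].
Proof.
move=> nxy; apply/pred0P => z; rewrite /= !inE.
apply: contraNF nxy => /andP [/andP [_ cxz] /andP [_ cyz]].
by apply: connect_trans cxz _; rewrite connect_on_sym.
Qed.

Lemma comps_partition I : partition (comps g I) I.
Proof.
apply: equivalence_partitionP => x y z _ _ _; split; first exact: connect0.
by move=> cxy; rewrite (same_connect (connect_on_sym I) cxy).
Qed.

Lemma card_comps I : #|I| = \sum_(C in comps g I) #|C|.
Proof. exact/card_partition/comps_partition. Qed.

(* [X] is a union of components of [g|_I] *)
Definition closed_in I X := forall x y, x \in X -> y \in I -> g x y -> y \in X.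

Lemma comp_closed I x : closed_in I (component I x).
Proof.
move=> a b; rewrite !inE => /andP [aI cxa] bI gab; rewrite bI.
by apply: connect_trans cxa (connect1 _); rewrite /rel_on /= aI bI.
Qed.

Lemma comps_closed I C : C \in comps g I -> closed_in I C.
Proof. by case/compsP => x _ ->; apply: comp_closed. Qed.

Lemma comp_restrict I X x : X \subset I -> closed_in I X -> x \in X ->
  component I x = component X x.
Proof.
move=> XI clX xX; apply/setP => y; rewrite !inE.
apply/andP/andP => [[yI cxy]|[yX cxy]]; last first.
  by split; [apply: (subsetP XI) | apply: connect_onS cxy].
pose P z := z \in X /\ connect (rel_on g X) x z.
apply: (@connect_stable _ _ P x y _ _ cxy); first by split; [|apply: connect0].
move=> a b [aX cxa] /and3P [aI bI gab]; have bX := clX _ _ aX bI gab.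
by split => //; apply: connect_trans cxa (connect1 _); rewrite /rel_on /= aX bX.
Qed.

Lemma comps_restrict I X : X \subset I -> closed_in I X ->
  {subset comps g X <= comps g I}.
Proof.
move=> XI clX C /compsP [x xX ->]; rewrite -(comp_restrict XI clX xX).
exact/comp_in/(subsetP XI).
Qed.

Lemma comps_comp W C : C \in comps g W -> comps g C = [set C].
Proof.
move=> CW; have [x xW defC] := compsP CW.
have xC : x \in C by rewrite defC comp_mem.
have eC : C = component C x by rewrite -(comp_restrict (comps_sub CW) (comps_closed CW) xC).
apply/setP => Z; rewrite inE; apply/idP/eqP => [/compsP [y yC ->]|->].
  by rewrite {2}eC; apply: comp_eq; rewrite -eC.
by rewrite {1}eC comp_in.
Qed.

Lemma ECP I : reflect (forall C, C \in comps g I -> ~~ odd #|C|) (EC g I).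
Proof. exact: forall_inP. Qed.

Lemma closed_in_even I X : X \subset I -> closed_in I X -> EC g I -> ~~ odd #|X|.
Proof.
move=> XI clX /ECP ecI; rewrite card_comps.
elim/big_ind: _ => [//|a b|C /(comps_restrict XI clX) /ecI //].
by rewrite oddD => /negbTE -> /negbTE ->.
Qed.

Lemma EC_set0 : EC g set0.
Proof. by apply/ECP => C; rewrite /comps imset0 inE. Qed.

Lemma EC_even I : EC g I -> ~~ odd #|I|.
Proof. by apply: closed_in_even. Qed.

End Components.

Definition n_odd_comps (T : finType) (g : rel T) (W : {set T}) :=
  #|[set C in comps g W | odd #|C|]|.

Lemma EC_n_odd_comps (T : finType) (g : rel T) (I : {set T}) :
  EC g I = (n_odd_comps g I == 0).
Proof.
rewrite /n_odd_comps cards_eq0; apply/ECP/eqP => [ecI|oI C CI].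
  by apply/setP => C; rewrite !inE; apply/negbTE/andP => -[/ecI/negbTE ->].
by apply/negP => oC; move/setP/(_ C): oI; rewrite !inE CI oC.
Qed.

Lemma n_odd_comps_le (T : finType) (g : rel T) (W : {set T}) :
  symmetric g -> n_odd_comps g W <= #|W|.
Proof.
move=> sg; apply: (@leq_trans #|comps g W|).
  by apply: subset_leq_card; apply/subsetP => C /setIdP [].
rewrite (card_comps sg W) -sum1_card; apply: leq_sum => C /comps_nonempty [x xC].
by rewrite card_gt0; apply/set0Pn; exists x.
Qed.

Lemma comp_edgeless (T : finType) (g : rel T) (W : {set T}) x :
  g =2 (fun _ _ => false) -> x \in W -> component g W x = [set x].
Proof.
move=> g0 xW; apply/setP => y; rewrite !inE; apply/andP/eqP => [[_ cxy]|->].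
  apply: (@connect_stable _ _ (eq^~ x) x y _ _ cxy) => // a b _.
  by rewrite /rel_on /= g0 !andbF.
by rewrite xW connect0.
Qed.

(** * The signed a-number *)

Section Extensionality.
Variables (T : finType) (g g' : rel T).
Hypothesis eq_g : g =2 g'.

Lemma eq_comps I : comps g I = comps g' I.
Proof.
apply: eq_imset => x; apply/setP => y; rewrite !inE (eq_connect (e' := rel_on g' I)) //.
by move=> a b; rewrite /rel_on /= eq_g.
Qed.

Lemma eq_sa_fuel n I : sa_fuel n g I = sa_fuel n g' I.
Proof.
elim: n I => //= n IH I; rewrite eq_comps; apply: eq_bigr => C _.
by under eq_bigr do rewrite IH.
Qed.

Lemma eq_sa I : sa g I = sa g' I. Proof. exact: eq_sa_fuel. Qed.

Lemma eq_bnum I : bnum g I = bnum g' I.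
Proof. by apply: eq_bigr => J _; apply: eq_sa. Qed.

Lemma eq_n_odd_comps I : n_odd_comps g I = n_odd_comps g' I.
Proof. by rewrite /n_odd_comps eq_comps. Qed.

End Extensionality.

Section SignedANumber.
Variables (T : finType) (g : rel T).
Hypothesis sg : symmetric g.
Implicit Types (A B I J K W C : {set T}).

Definition sa_connected C : int :=
  if odd #|C| then 0%R else (- \sum_(J in powerset C | J != C) sa g J)%R.

Lemma card_proper_comp I C J : C \in comps g I -> J \in powerset C -> J != C ->
  #|J| < #|I|.
Proof.
rewrite powersetE => CI JC JnC; apply: leq_trans (subset_leq_card (comps_sub CI)).
by apply: proper_card; rewrite properEneq JnC.
Qed.

Lemma sa_fuel_eq n m I : #|I| < n -> #|I| < m -> sa_fuel n g I = sa_fuel m g I.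
Proof.
elim: n m I => [|n IH] [|m] I //= ltIn ltIm; apply: eq_bigr => C CI.
case: ifP => // _; congr (- _)%R; apply: eq_bigr => J /andP [JC JnC].
by have ltJI := card_proper_comp CI JC JnC; apply: IH; apply: leq_trans ltJI _.
Qed.

Lemma saE I : sa g I = (\prod_(C in comps g I) sa_connected C)%R.
Proof.
apply: eq_bigr => C CI; rewrite /sa_connected; case: ifP => // _.
congr (- _)%R; apply: eq_bigr => J /andP [JC JnC]; apply: sa_fuel_eq => //.
exact: card_proper_comp CI JC JnC.
Qed.

Lemma sa_set0 : sa g set0 = 1%R.
Proof. by rewrite saE /comps imset0 big_set0. Qed.

Lemma bnum_set0 : bnum g set0 = 1%R.
Proof. by rewrite /bnum powerset0 big_set1 sa_set0. Qed.

Lemma saN I : ~~ EC g I -> sa g I = 0%R.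
Proof.
case/forall_inPn => C CI; rewrite negbK => oC.
by rewrite saE (bigD1 C) //= /sa_connected oC mul0r.
Qed.

Lemma sa_comp W C : C \in comps g W -> sa g C = sa_connected C.
Proof. by move=> CW; rewrite saE (comps_comp sg CW) big_set1. Qed.

Lemma sa_setU A B : [disjoint A & B] ->
  (forall a b, a \in A -> b \in B -> g a b = false) ->
  sa g (A :|: B) = (sa g A * sa g B)%R.
Proof.
move=> dAB nAB.
have clA : closed_in g (A :|: B) A by move=> x y xA /setUP [//|/(nAB _ _ xA) ->].
have clB : closed_in g (A :|: B) B.
  by move=> x y xB /setUP [/nAB/(_ xB)|//]; rewrite sg => ->.
rewrite !saE; have -> : comps g (A :|: B) = comps g A :|: comps g B.
  rewrite !compsE imsetU; congr (_ :|: _); apply: eq_in_imset => x xX.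
    exact: comp_restrict (subsetUl _ _) clA xX.
  exact: comp_restrict (subsetUr _ _) clB xX.
rewrite -bigU /=; first by apply: eq_bigl => C; rewrite !inE.
rewrite -setI_eq0; apply/eqP/setP => C; rewrite !inE.
apply/negbTE/andP => -[CA CB]; have [x xC] := comps_nonempty CA.
have xB := subsetP (comps_sub CB) x xC.
by rewrite (disjointFr dAB (subsetP (comps_sub CA) x xC)) in xB.
Qed.

Lemma bnum_comp_even W C : C \in comps g W -> ~~ odd #|C| -> bnum g C = 0%R.
Proof.
move=> CW eC; rewrite /bnum (bigD1 C) ?powersetE //=.
by rewrite (sa_comp CW) /sa_connected (negbTE eC) addNr.
Qed.

Lemma bnum_even_comp W C : C \in comps g W -> ~~ odd #|C| -> bnum g W = 0%R.
Proof.
move=> CW eC; have CsW := comps_sub CW; have clC := comps_closed CW.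
rewrite /bnum (big_powerset_split _ _ CsW).
transitivity (\sum_(A in powerset C) \sum_(B in powerset (W :\: C)) sa g A * sa g B)%R.
  apply: eq_bigr => A; rewrite powersetE => AC.
  apply: eq_bigr => B; rewrite powersetE subsetD => /andP [BW dBC].
  apply: sa_setU => [|a b /(subsetP AC) aC bB].
    by rewrite (disjointWl AC) // disjoint_sym.
  exact: contraFF (clC _ _ aC (subsetP BW _ bB)) (disjointFr dBC bB).
under eq_bigr do rewrite -big_distrr.
by rewrite -big_distrl /= -/(bnum g C) (bnum_comp_even CW eC) mul0r.
Qed.

Lemma bnum_EC W : EC g W -> W != set0 -> bnum g W = 0%R.
Proof.
move=> /ECP ecW /set0Pn [x xW].
exact: bnum_even_comp (comp_in g xW) (ecW _ (comp_in g xW)).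
Qed.

Lemma sa_unique (f : {set T} -> int) :
  (forall I, ~~ EC g I -> f I = 0%R) -> f set0 = 1%R ->
  (forall I, EC g I -> I != set0 -> (\sum_(K in powerset I) f K)%R = 0%R) ->
  f =1 sa g.
Proof.
move=> f0 f1 fsum I; have [n] := ubnP #|I|; elim: n I => // n IH I ltIn.
have [ecI|necI] := boolP (EC g I); last by rewrite f0 // saN.
have [->|I0] := eqVneq I set0; first by rewrite f1 sa_set0.
have IHI : (\sum_(K in powerset I | K != I) f K = \sum_(K in powerset I | K != I) sa g K)%R.
  apply: eq_bigr => K /andP [KI KnI]; apply: IH; apply: (@leq_trans #|I|) => //.
  by apply: proper_card; rewrite properEneq KnI -powersetE.
have := fsum I ecI I0; have := bnum_EC ecI I0.
rewrite /bnum (bigD1 I) ?powersetE //= => eb.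
rewrite (bigD1 I) ?powersetE //= IHI => ef.
by apply: (addIr (\sum_(K in powerset I | K != I) sa g K)%R); rewrite ef eb.
Qed.

End SignedANumber.

(** * Adding an edge *)

Section AddEdge.
Variables (T : finType) (g : rel T) (u v : T).
Hypothesis sg : symmetric g.
Implicit Types (I J W : {set T}).
Local Notation h := (add_edge g u v).

Lemma add_edge_sym : symmetric h.
Proof.
move=> x y; rewrite /add_edge /= sg; congr (_ || _).
by rewrite orbC; congr (_ || _); rewrite andbC.
Qed.

Lemma add_edgeW x y : g x y -> h x y.
Proof. by rewrite /add_edge /= => ->. Qed.

Definition joins_comps W :=
  [&& u \in W, v \in W & ~~ connect (rel_on g W) u v].

Lemma connect_add_edgeW W x y : connect (rel_on g W) x y -> connect (rel_on h W) x y.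
Proof.
apply: connect_sub => a b /and3P [aW bW gab].
by rewrite connect1 // /rel_on /= aW bW add_edgeW.
Qed.

Lemma connect_add_edge W : ~~ joins_comps W ->
  connect (rel_on h W) =2 connect (rel_on g W).
Proof.
move=> nj x y; apply/idP/idP => [|/connect_add_edgeW //].
move=> cxy; apply: (@connect_stable _ _ (connect (rel_on g W) x) x y _ _ cxy) => //.
move=> a b cxa /and3P [aW bW].
case/or3P => [gab|/andP [/eqP au /eqP bv]|/andP [/eqP av /eqP bu]].
- by apply: connect_trans cxa (connect1 _); rewrite /rel_on /= aW bW gab.
- by subst; move: nj; rewrite /joins_comps aW bW negbK => /(connect_trans cxa).
- subst; move: nj; rewrite /joins_comps aW bW negbK connect_on_sym // .
  exact: connect_trans cxa.
Qed.

Lemma comps_add_edge W : ~~ joins_comps W -> comps h W = comps g W.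
Proof.
move=> nj; apply: eq_imset => x; apply/setP => y.
by rewrite !inE connect_add_edge.
Qed.

Lemma EC_add_edge I : EC g I -> EC h I.
Proof.
move=> ecI; apply/ECP => C CI; apply: (closed_in_even sg (comps_sub CI)) => //.
by move=> a b aC bI gab; exact: comps_closed CI a b aC bI (add_edgeW gab).
Qed.

Lemma comp_add_edge W : u \in W -> v \in W ->
  component h W u = component g W u :|: component g W v.
Proof.
move=> uW vW; apply/setP => y; apply/idP/idP => [/setIdP [yW cuy]|].
  pose P z := z \in component g W u :|: component g W v.
  apply: (@connect_stable _ _ P u y _ _ cuy); first by rewrite /P inE comp_mem.
  rewrite /P; move=> a b aC /and3P [aW bW].
  case/or3P => [gab|/andP [_ /eqP ->]|/andP [_ /eqP ->]].
  - by case/setUP: aC => /comp_closed/(_ bW gab) bC; rewrite inE bC ?orbT.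
  - by rewrite inE comp_mem ?orbT.
  - by rewrite inE comp_mem.
have huv : connect (rel_on h W) u v.
  by apply: connect1; rewrite /rel_on /= uW vW /add_edge /= !eqxx orbT.
by rewrite !inE => /orP [] /andP [-> /connect_add_edgeW] // /(connect_trans huv).
Qed.

Lemma card_comp_add_edge W : joins_comps W ->
  #|component h W u| = #|component g W u| + #|component g W v|.
Proof.
case/and3P => uW vW nuv; rewrite comp_add_edge // cardsU.
by rewrite (disjoint_setI0 (comp_disjoint sg nuv)) cards0 subn0.
Qed.

Lemma comp_add_edge_closed W x : u \notin component g W x -> v \notin component g W x ->
  closed_in h W (component g W x).
Proof.
move=> nu nv a b aC bW; case/or3P => [gab|/andP [/eqP au _]|/andP [/eqP av _]].
- exact: comp_closed aC bW gab.
- by rewrite -au aC in nu.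
- by rewrite -av aC in nv.
Qed.

Lemma new_EC_joins J : EC h J -> ~~ EC g J -> joins_comps J.
Proof. by move=> ecJ; apply: contraNT => /comps_add_edge ecg; rewrite /EC -ecg. Qed.

Lemma new_EC_odd_comps J : EC h J -> ~~ EC g J ->
  [set C in comps g J | odd #|C|] = [set component g J u; component g J v].
Proof.
move=> ecJ necJ; have /and3P [uJ vJ nuv] := new_EC_joins ecJ necJ.
have other C : C \in comps g J -> C != component g J u -> C != component g J v ->
    ~~ odd #|C|.
  case/compsP => x xJ -> nu nv.
  have notin y : component g J x != component g J y -> y \notin component g J x.
    by apply: contra => /comp_eq ->.
  apply: (closed_in_even add_edge_sym (comp_sub _ _ _) _ ecJ).
  exact: comp_add_edge_closed (notin _ nu) (notin _ nv).
have oUV : ~~ odd (#|component g J u| + #|component g J v|).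
  by rewrite -card_comp_add_edge ?(ECP _ _ ecJ) ?comp_in //; apply/and3P.
have oU : odd #|component g J u|.
  apply: contraR necJ => eU; apply/ECP => C CJ.
  have [->//|nu] := eqVneq C (component g J u); have [->|] := eqVneq C (component g J v).
    by move: oUV; rewrite oddD (negbTE eU).
  exact: other.
have oV : odd #|component g J v| by move: oUV; rewrite oddD oU; case: odd.
apply/setP => C; rewrite !inE.
apply/idP/idP => [/andP [CJ oC]|/orP [] /eqP ->]; rewrite ?comp_in ?oU ?oV //.
by apply: contraLR oC; rewrite negb_or => /andP []; apply: other.
Qed.

Lemma new_EC_card J : EC h J -> ~~ EC g J -> 0 < #|J| /\ ~~ odd #|J|.
Proof.
move=> ecJ necJ; have /and3P [uJ _ _] := new_EC_joins ecJ necJ.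
by rewrite (EC_even add_edge_sym ecJ) card_gt0; split => //; apply/set0Pn; exists u.
Qed.

Lemma joins_comps_bnum W : joins_comps W -> odd #|component h W u| -> bnum g W = 0%R.
Proof.
move=> jW; have /and3P [uW vW _] := jW; rewrite card_comp_add_edge // oddD.
have evenW x : x \in W -> ~~ odd #|component g W x| -> bnum g W = 0%R.
  by move=> xW; apply: (bnum_even_comp sg (comp_in g xW)).
case: (boolP (odd #|component g W u|)) => /= [_|eu _]; first exact: evenW vW.
exact: evenW uW eu.
Qed.

Lemma new_EC_n_odd_comps J : EC h J -> ~~ EC g J -> n_odd_comps g J = 2.
Proof.
move=> ecJ necJ; have /and3P [_ vJ nuv] := new_EC_joins ecJ necJ.
rewrite /n_odd_comps new_EC_odd_comps // cards2; case: eqVneq => // euv.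
by have := @comp_mem _ g J v vJ; rewrite -euv inE (negbTE nuv) andbF.
Qed.

End AddEdge.

(** * The reconnected complement *)

Section Reconnect.
Variables (T : finType) (h : rel T) (J : {set T}).
Hypothesis sh : symmetric h.
Implicit Types (K : {set T}).
Local Notation hJ := (reconn h J).

Lemma reconn_sym : symmetric hJ.
Proof.
move=> x y; rewrite /reconn /= eq_sym setUC [[set y; x]]setUC.
by rewrite (connect_on_sym sh) setUC.
Qed.

Variable L : {set T}.
Hypothesis dJL : [disjoint J & L].

Lemma connect_reconn_step a b : a \in L -> b \in L ->
  connect (rel_on h (J :|: [set a; b])) a b -> connect (rel_on hJ L) a b.
Proof.
move=> aL bL cab; have [->|nab] := eqVneq a b; first exact: connect0.
by apply: connect1; rewrite /rel_on /= aL bL /reconn /= nab.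
Qed.

Lemma connect_reconn x y : x \in L -> y \in L ->
  connect (rel_on hJ L) x y = connect (rel_on h (J :|: L)) x y.
Proof.
move=> xL yL; apply/idP/idP.
  apply: connect_sub => a b /and3P [aL bL /andP [_ cab]]; apply: connect_onS cab.
  by rewrite setUS // subUset !sub1set aL bL.
(* The component S of x in hJ, together with the vertices of J that S reaches
   through J, is a union of components of h|_(J :|: L). *)
pose S := component hJ L x.
pose R := [set z in J | [exists w in S, connect (rel_on h (J :|: [set w])) w z]].
have hstep K w a b : connect (rel_on h K) w a -> a \in K -> b \in K -> h a b ->
    connect (rel_on h K) w b.
  by move=> cwa aK bK hab; apply: connect_trans cwa (connect1 _); rewrite /rel_on /= aK bK.
have clSR : closed_in h (J :|: L) (S :|: R).
  move=> a b /setUP [/setIdP [aL cxa]|/setIdP [aJ /exists_inP [w /setIdP [wL cxw] cwa]]].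
    case/setUP=> [bJ|bL] hab; rewrite !inE.
      apply/orP; right; rewrite bJ; apply/exists_inP; exists a; first by rewrite inE aL.
      by apply: connect1; rewrite /rel_on /= !inE eqxx bJ orbT.
    rewrite bL (connect_trans cxa) // connect_reconn_step // connect1 //.
    by rewrite /rel_on /= !inE !eqxx !orbT.
  case/setUP=> [bJ|bL] hab; rewrite !inE.
    apply/orP; right; rewrite bJ; apply/exists_inP; exists w; first by rewrite inE wL.
    by apply: (hstep _ _ _ _ cwa _ _ hab); rewrite !inE ?aJ ?bJ.
  rewrite bL (connect_trans cxw) // connect_reconn_step //.
  apply: (hstep _ _ _ _ (connect_onS _ cwa) _ _ hab); last by rewrite !inE eqxx !orbT.
  - by rewrite setUS // sub1set !inE eqxx.
  - by rewrite !inE aJ.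
have xSR : x \in S :|: R by rewrite inE comp_mem.
move=> cxy; have : y \in component h (J :|: L) x by rewrite inE cxy inE yL orbT.
rewrite (comp_restrict _ clSR xSR) => [/(subsetP (comp_sub _ _ _))|].
  case/setUP => [/setIdP [] //|/setIdP [yJ _]].
  by rewrite (disjointFr dJL yJ) in yL.
by apply/subsetP => z /setUP [] /setIdP [zX _]; rewrite inE zX ?orbT.
Qed.

Lemma reconn_comp x : x \in L -> component hJ L x = component h (J :|: L) x :&: L.
Proof.
move=> xL; apply/setP => y; rewrite !inE.
by case yL: (y \in L); rewrite ?andbF //= connect_reconn // orbT andbT.
Qed.

Lemma comps_reconn_mem K y : K \in comps h (J :|: L) -> y \in K -> y \in L ->
  K :&: L = component hJ L y.
Proof. by move=> KJL yK yL; rewrite reconn_comp // -(comps_mem sh KJL yK). Qed.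

Hypothesis ecJ : EC h J.

Lemma odd_comp_setI K : K \in comps h (J :|: L) -> odd #|K| = odd #|K :&: L|.
Proof.
move=> KJL; have clK := comps_closed KJL.
have eKJ : ~~ odd #|K :&: J|.
  apply: (closed_in_even sh (subsetIr _ _) _ ecJ) => a b /setIP [aK _] bJ hab.
  by rewrite inE bJ (clK _ _ aK _ hab) // inE bJ.
rewrite -(cardsID J K) oddD (negbTE eKJ) /=; congr odd; apply: eq_card => y.
rewrite !inE andbC [RHS]andbC; case yK: (y \in K); rewrite ?andbF //=.
have := subsetP (comps_sub KJL) y yK; rewrite inE.
by case/orP => [yJ|yL]; rewrite ?yJ ?(disjointFr dJL yJ) ?yL ?(disjointFl dJL yL).
Qed.

Lemma odd_comp_meets K : K \in comps h (J :|: L) -> odd #|K| ->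
  exists2 y, y \in K & y \in L.
Proof.
move=> KJL; rewrite odd_comp_setI // => oKL.
have [y /setIP [yK yL]] : exists y, y \in K :&: L.
  by apply/set0Pn; apply: contraTneq oKL => ->; rewrite cards0.
by exists y.
Qed.

Lemma odd_comps_reconn : [set C in comps hJ L | odd #|C|] =
  [set K :&: L | K in [set K in comps h (J :|: L) | odd #|K|]].
Proof.
apply/setP => C; apply/setIdP/imsetP => [[/compsP [x xL ->] oC]|[K /setIdP [KJL oK] ->]].
  have KJL : component h (J :|: L) x \in comps h (J :|: L).
    by rewrite comp_in // inE xL orbT.
  exists (component h (J :|: L) x); last exact: reconn_comp.
  by rewrite inE KJL odd_comp_setI -?reconn_comp.
have [y yK yL] := odd_comp_meets KJL oK.
rewrite (comps_reconn_mem KJL yK yL) comp_in //.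
by rewrite -(comps_reconn_mem KJL yK yL) -odd_comp_setI.
Qed.

Lemma n_odd_comps_reconn : n_odd_comps hJ L = n_odd_comps h (J :|: L).
Proof.
rewrite /n_odd_comps odd_comps_reconn card_in_imset // => K1 K2.
move=> /setIdP [K1JL oK1] /setIdP [K2JL _] eK.
have [y yK1 yL] := odd_comp_meets K1JL oK1.
have /setIP [yK2 _] : y \in K2 :&: L by rewrite -eK inE yK1.
by rewrite (comps_mem sh K1JL yK1) (comps_mem sh K2JL yK2).
Qed.

Lemma EC_reconn : EC hJ L = EC h (J :|: L).
Proof. by rewrite !EC_n_odd_comps n_odd_comps_reconn. Qed.

End Reconnect.

(** * The deletion recursion *)

Section DeletionRecursion.
Variables (T : finType) (g : rel T) (u v : T).
Hypothesis sg : symmetric g.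
Implicit Types (I J K L : {set T}).
Local Notation h := (add_edge g u v).
Local Notation new_EC J := (EC h J && ~~ EC g J).

Let sh : symmetric h := add_edge_sym u v sg.

Definition sa_split I : int :=
  (sa g I - \sum_(J in powerset I | new_EC J) bnum g J * sa (reconn h J) (I :\: J))%R.

Lemma sum_sa_split I : (\sum_(K in powerset I) sa_split K =
  bnum g I - \sum_(J in powerset I | new_EC J) bnum g J * bnum (reconn h J) (I :\: J))%R.
Proof.
rewrite sumrB; congr (_ - _)%R; rewrite big_powerset_exchange.
apply: eq_bigr => J _; rewrite /bnum big_distrr; apply: eq_bigr => L.
rewrite powersetE subsetD => /andP [_ dLJ].
by rewrite setDUl setDv set0U (setDidPl dLJ).
Qed.

Lemma reconn_sa_eq0 I J : J \subset I -> EC h J -> ~~ EC h I ->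
  sa (reconn h J) (I :\: J) = 0%R.
Proof.
by move=> JI ecJ necI; rewrite saN // EC_reconn ?setDK // disjoint_setD.
Qed.

Lemma reconn_bnum_eq0 I J : J \subset I -> J != I -> EC h J -> EC h I ->
  bnum (reconn h J) (I :\: J) = 0%R.
Proof.
move=> JI JnI ecJ ecI; apply: bnum_EC; first exact: reconn_sym.
  by rewrite EC_reconn ?setDK // disjoint_setD.
by rewrite setD_eq0; apply: contra JnI => IJ; rewrite eqEsubset JI.
Qed.

Lemma sa_add_edge I : sa h I = sa_split I.
Proof.
symmetry; apply: (sa_unique sh) => {I} [I necI||I ecI I0].
- rewrite /sa_split saN ?big1 ?subr0 => [//|J /andP [JI /andP [ecJ _]]|].
    by rewrite reconn_sa_eq0 ?mulr0 // -powersetE.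
  by apply: contra necI; apply: EC_add_edge.
- rewrite /sa_split sa_set0 big1 ?subr0 // => J /andP [].
  by rewrite powersetE subset0 => /eqP -> /andP [_]; rewrite EC_set0.
rewrite sum_sa_split; case NI: (new_EC I).
  rewrite (bigD1 I) ?powersetE ?subxx ?NI //=.
  have -> : bnum (reconn h I) (I :\: I) = 1%R by rewrite setDv bnum_set0.
  rewrite mulr1 big1 ?addr0 ?subrr // => J /andP [/andP [JI /andP [ecJ _]] JnI].
  by rewrite reconn_bnum_eq0 ?mulr0 // -powersetE.
have ecgI : EC g I by move: NI; rewrite ecI /=; case: (EC g I).
rewrite bnum_EC // big1 ?subrr // => J /andP [JI /andP [ecJ necJ]].
by rewrite reconn_bnum_eq0 ?mulr0 -?powersetE //; apply: contraNneq necJ => ->.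
Qed.

Lemma bnum_add_edge I : bnum h I =
  (bnum g I - \sum_(J in powerset I | new_EC J) bnum g J * bnum (reconn h J) (I :\: J))%R.
Proof. by rewrite -sum_sa_split; apply: eq_bigr => K _; apply: sa_add_edge. Qed.

End DeletionRecursion.

(** * Signs *)

Definition sgn (n : nat) : int := ((-1) ^+ n./2)%R.

Lemma sgnD_even m n : ~~ odd m -> sgn (m + n) = (sgn m * sgn n)%R.
Proof. by move=> em; rewrite /sgn halfD (negbTE em) /= add0n exprD. Qed.

Lemma sgnSS n : sgn n.+2 = (- sgn n)%R.
Proof. by rewrite /sgn /= exprS mulN1r. Qed.

(* The minus sign comes from (|W| - k)/2 = (|J| - 2)/2 + 1 + (|W \ J| - k)/2. *)
Lemma sgn_split (T : finType) (W J : {set T}) k (x y : int) :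
  J \subset W -> 0 < #|J| -> ~~ odd #|J| -> k <= #|W :\: J| ->
  (- (sgn (#|W| - k) * (x * y)))%R =
  (sgn (#|J| - 2) * x * (sgn (#|W :\: J| - k) * y))%R.
Proof.
move=> JW J0 eJ le_k; have cW := cardsDS JW; have JW' := subset_leq_card JW.
have [j Jj] : exists j, #|J| = j.+2 by move: J0 eJ; case: #|J| => [|[|j]] // _ _; exists j.
have -> : #|W| - k = j.+2 + (#|W :\: J| - k) by lia.
have -> : #|J| - 2 = j by lia.
rewrite sgnD_even; last by rewrite -Jj.
by rewrite sgnSS !mulNr opprK mulrACA.
Qed.

Definition signed (T : finType) (g : rel T) (W : {set T}) :=
  (0 <= sgn #|W| * sa g W)%R /\ (0 <= sgn (#|W| - n_odd_comps g W) * bnum g W)%R.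

Lemma eq_signed (T : finType) (g g' : rel T) W : g =2 g' -> signed g W -> signed g' W.
Proof.
by move=> eq_g; rewrite /signed (eq_sa eq_g) (eq_bnum eq_g) (eq_n_odd_comps eq_g).
Qed.

Lemma signed_edgeless (T : finType) (g : rel T) W :
  g =2 (fun _ _ => false) -> signed g W.
Proof.
move=> g0.
have sa0 I : I != set0 -> sa g I = 0%R.
  case/set0Pn => x xI; apply: saN; apply/negP => /ECP /(_ _ (comp_in g xI)).
  by rewrite (comp_edgeless g0 xI) cards1.
have odd_comps : [set C in comps g W | odd #|C|] = [set [set x] | x in W].
  rewrite compsE (eq_in_imset (fun x xW => comp_edgeless g0 xW)).
  apply/setP => C; rewrite inE andb_idr // => /imsetP [x _ ->].
  by rewrite cards1.
split.
  have [->|W0] := eqVneq W set0; last by rewrite sa0 // mulr0.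
  by rewrite cards0 sa_set0 /sgn expr0 mulr1 ler01.
have -> : bnum g W = 1%R.
  rewrite /bnum (bigD1 set0) ?powersetE ?sub0set //= sa_set0 big1 ?addr0 //.
  by move=> I /andP [_]; apply: sa0.
rewrite /n_odd_comps odd_comps card_imset; last exact: set1_inj.
by rewrite subnn /sgn expr0 mulr1 ler01.
Qed.

Section SignStep.
Variables (T : finType) (g : rel T) (u v : T) (W : {set T}).
Hypothesis sg : symmetric g.
Local Notation h := (add_edge g u v).
Implicit Types (J X : {set T}).
Hypothesis signed_g : forall J, J \subset W -> signed g J.
Hypothesis signed_lt : forall (g' : rel T) X, symmetric g' -> #|X| < #|W| -> signed g' X.

Let sh : symmetric h := add_edge_sym u v sg.

Lemma new_term_sign J k (y : int) : J \subset W -> EC h J -> ~~ EC g J ->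
  k <= #|W :\: J| -> (0 <= sgn (#|W :\: J| - k) * y)%R ->
  (0 <= - (sgn (#|W| - k) * (bnum g J * y)))%R.
Proof.
move=> JW ecJ necJ le_k y_ge0; have [J0 eJ] := new_EC_card sg ecJ necJ.
rewrite (@sgn_split _ W J) // mulr_ge0 // -(new_EC_n_odd_comps sg ecJ necJ).
exact: (signed_g JW).2.
Qed.

Lemma signed_reconn J : J \subset W -> EC h J -> ~~ EC g J ->
  signed (reconn h J) (W :\: J).
Proof.
move=> JW ecJ necJ; apply: signed_lt; first exact: reconn_sym.
have [J0 _] := new_EC_card sg ecJ necJ.
by rewrite cardsDS //; have := subset_leq_card JW; lia.
Qed.

Lemma signed_sa_add_edge : (0 <= sgn #|W| * sa h W)%R.
Proof.
rewrite (sa_add_edge u v sg) /sa_split mulrBr mulr_sumr -sumrN.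
apply: addr_ge0; first exact: (signed_g (subxx W)).1.
apply: sumr_ge0 => J /andP [JW /andP [ecJ necJ]]; rewrite powersetE in JW.
have := @new_term_sign J 0; rewrite !subn0; apply => //.
exact: (signed_reconn JW ecJ necJ).1.
Qed.

Lemma signed_bnum_add_edge :
  (0 <= sgn (#|W| - n_odd_comps h W) * bnum h W)%R.
Proof.
have [/forall_inP all_odd|/forall_inPn [C CW]] := boolP [forall C in comps h W, odd #|C|];
  last by move=> eC; rewrite (bnum_even_comp sh CW eC) mulr0.
rewrite (bnum_add_edge u v sg) mulrBr [X in (_ - X)%R]mulr_sumr -sumrN; apply: addr_ge0.
  have [jW|njW] := boolP (joins_comps g u v W).
    have /and3P [uW _ _] := jW.
    by rewrite (joins_comps_bnum sg jW (all_odd _ (comp_in _ uW))) mulr0.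
  by rewrite /n_odd_comps (comps_add_edge sg njW); exact: (signed_g (subxx W)).2.
apply: sumr_ge0 => J /andP [JW /andP [ecJ necJ]]; rewrite powersetE in JW.
have odd_eq : n_odd_comps (reconn h J) (W :\: J) = n_odd_comps h W.
  by rewrite n_odd_comps_reconn ?setDK ?disjoint_setD.
apply: new_term_sign; rewrite -?odd_eq //; last exact: (signed_reconn JW ecJ necJ).2.
by apply: n_odd_comps_le; apply: reconn_sym.
Qed.

End SignStep.

Definition n_edges (T : finType) (g : rel T) := #|[set p : T * T | g p.1 p.2]|.

Definition remove_edge (T : finType) (g : rel T) (a b : T) : rel T :=
  [rel x y | g x y && ~~ ((x == a) && (y == b) || (x == b) && (y == a))].

Section RemoveEdge.
Variables (T : finType) (g : rel T) (a b : T).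
Hypothesis sg : symmetric g.
Hypothesis gab : g a b.

Lemma remove_edge_sym : symmetric (remove_edge g a b).
Proof.
move=> x y; rewrite /remove_edge /= sg orbC.
by rewrite [(y == b) && _]andbC [(y == a) && _]andbC.
Qed.

Lemma add_remove_edge : add_edge (remove_edge g a b) a b =2 g.
Proof.
move=> x y; rewrite /add_edge /remove_edge /=.
set c := (_ && _ || _ && _).
have gc : c -> g x y by case/orP => /andP [/eqP -> /eqP ->]; rewrite // sg.
by case: c gc => [->|_]; rewrite ?orbT ?andbT ?orbF.
Qed.

Lemma n_edges_remove : n_edges (remove_edge g a b) < n_edges g.
Proof.
apply: proper_card; apply/properP; split.
  by apply/subsetP => p; rewrite !inE => /andP [].
by exists (a, b); rewrite !inE /= ?gab // /remove_edge /= !eqxx andbF.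
Qed.

End RemoveEdge.

Theorem sym_signed (T : finType) (g : rel T) (W : {set T}) : symmetric g -> signed g W.
Proof.
have [n ltWn] := ubnP #|W|; elim: n g W ltWn => // n IHn g W ltWn sg.
suff IHm m (g' : rel T) (X : {set T}) :
    n_edges g' < m -> symmetric g' -> #|X| <= n -> signed g' X.
  exact: (IHm (n_edges g).+1).
elim: m g' X => // m IHm g' X lt_m sg' leXn.
have [g0|[[a b] gab]] : g' =2 (fun _ _ => false) \/ exists p : T * T, g' p.1 p.2.
- case: (pickP [pred p : T * T | g' p.1 p.2]) => [p gp|none]; first by right; exists p.
  by left => x y; apply: none (x, y).
- exact: signed_edgeless.
apply: (eq_signed (add_remove_edge sg' gab)).
have signed_sub (J : {set T}) : J \subset X -> signed (remove_edge g' a b) J.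
  move=> JX; apply: IHm; first exact: leq_trans (n_edges_remove gab) lt_m.
    exact: remove_edge_sym.
  exact: leq_trans (subset_leq_card JX) leXn.
have signed_lt (g'' : rel T) (Y : {set T}) : symmetric g'' -> #|Y| < #|X| -> signed g'' Y.
  by move=> sg'' ltY; apply: IHn => //; apply: leq_trans ltY leXn.
have sg'' := remove_edge_sym a b sg'.
by split; [apply: signed_sa_add_edge | apply: signed_bnum_add_edge].
Qed.

(** * The recursion for a_i *)

Lemma abs_signed (x : int) n : (0 <= sgn n * x)%R -> Posz `|x|%N = (sgn n * x)%R.
Proof.
by move=> x_ge0; rewrite abszE -(ger0_norm x_ge0) normrM normrX normrN1 expr1n mul1r.
Qed.

Lemma abs_sa_add_edge (T : finType) (g : rel T) u v (I : {set T}) : symmetric g ->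
  `|sa (add_edge g u v) I|%N =
  (`|sa g I| + \sum_(J in powerset I | EC (add_edge g u v) J && ~~ EC g J)
      `|bnum g J| * `|sa (reconn (add_edge g u v) J) (I :\: J)|)%N.
Proof.
move=> sg; have sh := add_edge_sym u v sg.
apply/eqP; rewrite -eqz_nat; apply/eqP.
rewrite (abs_signed (sym_signed I sh).1) PoszD (abs_signed (sym_signed I sg).1).
rewrite (big_morph Posz PoszD (erefl (Posz 0))) (sa_add_edge u v sg) /sa_split.
rewrite mulrBr mulr_sumr -sumrN; congr (_ + _)%R.
apply: eq_bigr => J /andP [JI /andP [ecJ necJ]]; rewrite powersetE in JI.
have [J0 eJ] := new_EC_card sg ecJ necJ.
rewrite PoszM (abs_signed (sym_signed J sg).2) (new_EC_n_odd_comps sg ecJ necJ).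
rewrite (abs_signed (sym_signed (I :\: J) (reconn_sym J sh)).1).
by have := @sgn_split _ I J 0 (bnum g J) (sa (reconn _ J) (I :\: J)); rewrite !subn0 => ->.
Qed.

Lemma a_idxE (T : finType) (g : rel T) V k :
  a_idx g V (Posz k) = (\sum_(I in powerset V | #|I| == k.*2) `|sa g I|)%N.
Proof. by []. Qed.

Lemma a_idx_shift (T : finType) (g : rel T) V i j : ~~ odd j ->
  (\sum_(L in powerset V | j + #|L| == i.*2) `|sa g L|)%N =
  a_idx g V (Posz i - Posz (j %/ 2)).
Proof.
move=> ej; have j2 : j = (j %/ 2).*2 by rewrite divn2 halfK (negbTE ej) subn0.
case: (leqP (j %/ 2) i) => ji.
  by rewrite subzn // a_idxE; apply: eq_bigl => L; congr (_ && _); apply/eqP/eqP; lia.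
have -> : (Posz i - Posz (j %/ 2))%R = Negz (j %/ 2 - i).-1.
  by rewrite NegzE; apply/eqP; rewrite -subr_eq0; apply/eqP; lia.
by rewrite big_pred0 // => L; rewrite andbC; case: eqP => //; lia.
Qed.

Theorem mainTheorem8 (T : finType) (g : rel T)
  (g_sym : symmetric g) (g_irr : irreflexive g)
  (u v : T) (huv : u != v) (i : nat) :
  a_idx (add_edge g u v) [set: T] (Posz i) =
  (a_idx g [set: T] (Posz i) +
   \sum_(J : {set T} | EC (add_edge g u v) J && ~~ EC g J)
      `|bnum g J|%N *
      a_idx (reconn (add_edge g u v) J) (~: J)
            (Posz i - Posz (#|J| %/ 2)))%N.
Proof.
rewrite !a_idxE; under eq_bigr do rewrite (abs_sa_add_edge u v _ g_sym).
rewrite big_split /= (big_powerset_pairs _ _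
  (fun J L => `|bnum g J| * `|sa (reconn (add_edge g u v) J) L|)%N); congr (_ + _)%N.
apply: eq_bigr => J /andP [ecJ _].
by rewrite -big_distrr a_idx_shift // (EC_even (add_edge_sym u v g_sym) ecJ).
Qed.
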